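(* Let $\Upsilon$ be a toral relatively hyperbolic group, $H\le\Upsilon$ a subgroup, and $\mathcal P$ a collection of nontrivial abelian subgroups of $H$. If $(H,\mathcal P)$ is relatively immutable in $\Upsilon$, then so is $(H,\mathcal P')$, where $\mathcal P'=\{Z_H(P)\mid P\in\mathcal P\}$ and $Z_H(P)$ denotes the centralizer of $P$ in $H$. Also, if $(H,\mathcal P)$ is relatively immutable in $\Upsilon$, then so is $(H,\mathcal P_0)$, where $\mathcal P_0$ consists of a collection of $H$-conjugacy representatives of the elements of $\mathcal P$.
   Context: A group is toral relatively hyperbolic if it is torsion-free and hyperbolic relative to finitely generated abelian subgroups. $\mathrm{Hom}_{\mathcal P}(H,\Upsilon)$ is the set of homomorphisms $\lambda\colon H\to\Upsilon$ such that for each $P\in\mathcal P$, $\lambda|_P$ is the restriction to $P$ of an inner automorphism of $\Upsilon$ (depending on $P$). $(H,\mathcal P)$ is relatively immutable in $\Upsilon$ if $\mathrm{Hom}_{\mathcal P}(H,\Upsilon)$ contains only finitely many $\Upsilon$-conjugacy classes of injective homomorphisms. *)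

From Stdlib Require Import List Arith Lia.
Import ListNotations.
Set Implicit Arguments.

Record group := Group {
  gcar :> Type;
  gmul : gcar -> gcar -> gcar;
  gone : gcar;
  ginv : gcar -> gcar;
  gmulA : forall x y z, gmul x (gmul y z) = gmul (gmul x y) z;
  gmul1l : forall x, gmul gone x = x;
  gmulVl : forall x, gmul (ginv x) x = gone }.

Arguments gmul {g}. Arguments gone {g}. Arguments ginv {g}.

Section GroupDefs.
Variable G : group.

Definition finite_set {T : Type} (A : T -> Prop) : Prop :=
  exists l : list T, forall x, A x -> In x l.

Definition conj (g x : G) : G := gmul (ginv g) (gmul x g).

Fixpoint gpow (x : G) (n : nat) : G :=
  match n with O => gone | S m => gmul x (gpow x m) end.

Definition is_subgroup (H : G -> Prop) : Prop :=
  H gone /\ (forall x y, H x -> H y -> H (gmul x y)) /\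
  (forall x, H x -> H (ginv x)).

Definition abelian (P : G -> Prop) : Prop :=
  forall x y, P x -> P y -> gmul x y = gmul y x.

Definition fg_subgroup (H : G -> Prop) : Prop :=
  is_subgroup H /\
  exists S : list G, (forall s, In s S -> H s) /\
    forall K, is_subgroup K -> (forall s, In s S -> K s) -> forall x, H x -> K x.

Definition fg_group : Prop := fg_subgroup (fun _ => True).

Definition torsion_free : Prop :=
  forall (x : G) (n : nat), x <> gone -> gpow x (S n) <> gone.

Definition conj_subsets (A B : G -> Prop) : Prop :=
  exists g, forall x, A x <-> B (conj g x).

Definition conj_in (H A B : G -> Prop) : Prop :=
  exists h, H h /\ forall x, A x <-> B (conj h x).

Definition centralizer (H P : G -> Prop) : G -> Prop :=
  fun x => H x /\ forall p, P p -> gmul x p = gmul p x.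

Section Graphs.
Variable V : Type.
Variable adj : V -> V -> Prop.

Inductive walk : V -> V -> nat -> Prop :=
| walk0 u : walk u u 0
| walkS u w v n : adj u w -> walk w v n -> walk u v (S n).

Definition gdist (u v : V) (n : nat) : Prop :=
  walk u v n /\ forall m, walk u v m -> n <= m.

Definition connected_graph : Prop := forall u v, exists n, walk u v n.

Definition hyperbolic_graph : Prop :=
  exists delta : nat, forall x y z w dxy dzw dxz dyw dxw dyz,
    gdist x y dxy -> gdist z w dzw -> gdist x z dxz -> gdist y w dyw ->
    gdist x w dxw -> gdist y z dyz ->
    dxy + dzw <= Nat.max (dxz + dyw) (dxw + dyz) + 2 * delta.

Fixpoint chain (l : list V) : Prop :=
  match l with
  | x :: ((y :: _) as t) => adj x y /\ chain t
  | _ => True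
  end.

(** a circuit: a closed path without repeated vertices, of length >= 3,
    given by its cyclic list of vertices *)
Definition circuit (l : list V) : Prop :=
  NoDup l /\ 3 <= length l /\ chain (l ++ firstn 1 l).

Definition circuit_contains_edge (a b : V) (l : list V) : Prop :=
  exists l1 l2, l ++ firstn 1 l = l1 ++ a :: b :: l2 \/
                l ++ firstn 1 l = l1 ++ b :: a :: l2.

Definition fine_graph : Prop :=
  forall a b, adj a b -> forall n,
    finite_set (fun l => circuit l /\ length l = n /\ circuit_contains_edge a b l).

End Graphs.

Definition is_graph_action (V : Type) (adj : V -> V -> Prop) (act : G -> V -> V) : Prop :=
  (forall v, act gone v = v) /\
  (forall g h v, act (gmul g h) v = act g (act h v)) /\
  (forall g u v, adj u v -> adj (act g u) (act g v)).

(** (G, Ps) relatively hyperbolic in the sense of Bowditch: G acts on a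
    connected, fine, hyperbolic graph with finite edge stabilizers and finitely
    many orbits of edges, and Ps is a set of representatives of the conjugacy
    classes of infinite vertex stabilizers. *)
Definition rel_hyperbolic (Ps : list (G -> Prop)) : Prop :=
  exists (V : Type) (adj : V -> V -> Prop) (act : G -> V -> V),
    (forall u v, adj u v -> adj v u) /\ (forall u, ~ adj u u) /\
    connected_graph adj /\ hyperbolic_graph adj /\ fine_graph adj /\
    is_graph_action adj act /\
    (forall u v, adj u v ->
       finite_set (fun g => (act g u = u /\ act g v = v) \/
                            (act g u = v /\ act g v = u))) /\
    (exists E : list (V * V), forall u v, adj u v ->
       exists a b g, In (a, b) E /\
         ((act g a = u /\ act g b = v) \/ (act g a = v /\ act g b = u))) /\
    (forall P, In P Ps ->
       exists v, (forall g, P g <-> act g v = v) /\ ~ finite_set P) /\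
    (forall v, ~ finite_set (fun g => act g v = v) ->
       exists P, In P Ps /\ conj_subsets (fun g => act g v = v) P) /\
    (forall i j, i < length Ps -> j < length Ps ->
       conj_subsets (nth i Ps (fun _ => False)) (nth j Ps (fun _ => False)) ->
       i = j).

Definition toral_rel_hyp : Prop :=
  torsion_free /\ fg_group /\
  exists Ps : list (G -> Prop),
    (forall P, In P Ps -> is_subgroup P /\ abelian P /\ fg_subgroup P) /\
    rel_hyperbolic Ps.

(** * Relative immutability.  Homomorphisms H -> G are represented by
    functions G -> G, only their values on H mattering. *)
Definition hom_on (H : G -> Prop) (lam : G -> G) : Prop :=
  forall x y, H x -> H y -> lam (gmul x y) = gmul (lam x) (lam y).

Definition injective_on (H : G -> Prop) (lam : G -> G) : Prop :=
  forall x y, H x -> H y -> lam x = lam y -> x = y.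

Definition in_HomP (H : G -> Prop) (Ps : (G -> Prop) -> Prop) (lam : G -> G) : Prop :=
  hom_on H lam /\
  forall P, Ps P -> exists g, forall x, P x -> lam x = conj g x.

Definition conj_homs (H : G -> Prop) (lam mu : G -> G) : Prop :=
  exists g, forall x, H x -> mu x = conj g (lam x).

Definition rel_immutable (H : G -> Prop) (Ps : (G -> Prop) -> Prop) : Prop :=
  exists L : list (G -> G),
    (forall mu, In mu L -> in_HomP H Ps mu /\ injective_on H mu) /\
    forall lam, in_HomP H Ps lam -> injective_on H lam ->
      exists mu, In mu L /\ conj_homs H mu lam.

End GroupDefs.

(** A smaller set of homomorphisms has no more conjugacy classes, so it suffices
    to see that both new collections only shrink Hom_P(H, Υ). For P' this is
    because an abelian P is contained in Z_H(P), so a map inner on Z_H(P) is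
    inner on P. For P0, if lam is conjugation by g on Q = P^h (h in H), then on
    P it is conjugation by h g (lam h)^-1. *)

From Stdlib Require Import List Classical.
Import ListNotations.
Set Implicit Arguments.

Lemma cover_by_list_sub (T : Type) (R : T -> T -> Prop) (A B : T -> Prop) (L : list T) :
  (forall x y z, R x y -> R x z -> R y z) ->
  (forall x, A x -> B x) ->
  (forall x, B x -> exists y, In y L /\ R y x) ->
  exists L', (forall y, In y L' -> A y) /\ forall x, A x -> exists y, In y L' /\ R y x.
Proof.
  intros R_trans AB coverL.
  assert (filter_cover : exists L', (forall y, In y L' -> A y) /\
            forall x, A x -> (exists y, In y L /\ R y x) -> exists y, In y L' /\ R y x).
  { clear coverL. induction L as [|m L [L' [L'A L'cover]]].
    - exists []. split; [intros _ []|]. intros x _ [y [[] _]].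
    - destruct (classic (exists a, A a /\ R m a)) as [[a [Aa Rma]]|noA].
      + exists (a :: L'). split.
        * intros y [<-|Iy]; auto.
        * intros x Ax [y [[<-|Iy] Ryx]].
          -- exists a. split; [left; reflexivity | eauto].
          -- destruct (L'cover x Ax (ex_intro _ y (Logic.conj Iy Ryx))) as [z [Iz Rzx]].
             exists z. split; [right|]; assumption.
      + exists L'. split; [assumption|].
        intros x Ax [y [[<-|Iy] Ryx]].
        * exfalso. apply noA. exists x. auto.
        * eauto. }
  destruct filter_cover as [L' [L'A L'cover]].
  exists L'. split; auto.
Qed.

Section Groups.
Variable G : group.

Lemma mulgV (x : G) : gmul x (ginv x) = gone.
Proof.
  rewrite <- (gmul1l G (gmul x (ginv x))), <- (gmulVl G (ginv x)) at 1.
  rewrite <- gmulA, (gmulA G (ginv x) x (ginv x)), gmulVl, gmul1l.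
  apply gmulVl.
Qed.

Lemma mulg1 (x : G) : gmul x gone = x.
Proof. rewrite <- (gmulVl G x), gmulA, mulgV. apply gmul1l. Qed.

Lemma invg_unique (a b : G) : gmul a b = gone -> b = ginv a.
Proof.
  intro ab1. rewrite <- (gmul1l G b), <- (gmulVl G a), <- gmulA, ab1. apply mulg1.
Qed.

Lemma invgM (x y : G) : ginv (gmul x y) = gmul (ginv y) (ginv x).
Proof.
  symmetry. apply invg_unique.
  rewrite gmulA, <- (gmulA G x y), mulgV, mulg1. apply mulgV.
Qed.

Lemma invg1 : ginv (gone : G) = gone.
Proof. symmetry. apply invg_unique, mulg1. Qed.

Lemma conjgM (a b x : G) : conj G a (conj G b x) = conj G (gmul b a) x.
Proof. unfold conj. rewrite invgM, !gmulA. reflexivity. Qed.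

Lemma conjg1 (x : G) : conj G gone x = x.
Proof. unfold conj. rewrite mulg1, invg1. apply gmul1l. Qed.

Lemma conjgKV (g x : G) : conj G (ginv g) (conj G g x) = x.
Proof. rewrite conjgM, mulgV. apply conjg1. Qed.

Lemma idempotent_eq1 (e : G) : gmul e e = e -> e = gone.
Proof.
  intro ee. rewrite <- (gmulVl G e). rewrite <- ee at 3.
  rewrite gmulA, gmulVl, gmul1l. reflexivity.
Qed.

Section Homomorphisms.
Variables (H : G -> Prop) (lam : G -> G).
Hypotheses (subH : is_subgroup G H) (homH : hom_on G H lam).

Lemma hom_inv (h : G) : H h -> lam (ginv h) = ginv (lam h).
Proof.
  destruct subH as [H1 [HM HI]]. intro Hh. apply invg_unique.
  rewrite <- homH, mulgV by auto.
  apply idempotent_eq1. rewrite <- homH, mulg1 by auto. reflexivity.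
Qed.

Lemma hom_conj (a y : G) : H a -> H y -> lam (conj G a y) = conj G (lam a) (lam y).
Proof.
  destruct subH as [H1 [HM HI]]. intros Ha Hy.
  unfold conj. rewrite !homH, hom_inv by auto. reflexivity.
Qed.

End Homomorphisms.

Lemma conj_homs_trans (H : G -> Prop) (mu l1 l2 : G -> G) :
  conj_homs G H mu l1 -> conj_homs G H mu l2 -> conj_homs G H l1 l2.
Proof.
  intros [g1 mu_l1] [g2 mu_l2]. exists (gmul (ginv g1) g2). intros x Hx.
  rewrite mu_l2, mu_l1, <- conjgM, conjgKV by assumption. reflexivity.
Qed.

Lemma rel_immutable_sub (H : G -> Prop) (Ps Qs : (G -> Prop) -> Prop) :
  (forall lam, in_HomP G H Qs lam -> in_HomP G H Ps lam) ->
  rel_immutable G H Ps -> rel_immutable G H Qs.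
Proof.
  intros QsPs [L [_ coverL]].
  destruct (@cover_by_list_sub (G -> G) (conj_homs G H)
              (fun lam => in_HomP G H Qs lam /\ injective_on G H lam)
              (fun lam => in_HomP G H Ps lam /\ injective_on G H lam) L)
    as [L' [L'sub L'cover]].
  - apply conj_homs_trans.
  - intros lam [homQ inj]. auto.
  - intros lam [homP inj]. auto.
  - exists L'. split; [assumption|]. intros lam homQ inj. auto.
Qed.

Lemma in_HomP_sub (H : G -> Prop) (Ps Qs : (G -> Prop) -> Prop) (lam : G -> G) :
  (forall P, Ps P -> exists Q, Qs Q /\ forall x, P x -> Q x) ->
  in_HomP G H Qs lam -> in_HomP G H Ps lam.
Proof.
  intros PsQs [homH innerQ]. split; [assumption|].
  intros P PsP. destruct (PsQs P PsP) as [Q [QsQ PQ]].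
  destruct (innerQ Q QsQ) as [g lamQ]. exists g. auto.
Qed.

Lemma abelian_sub_centralizer (H P : G -> Prop) :
  (forall x, P x -> H x) -> abelian G P -> forall x, P x -> centralizer G H P x.
Proof. intros PH abP x Px. split; auto. Qed.

Lemma inner_on_conj_in (H P Q : G -> Prop) (lam : G -> G) (g : G) :
  is_subgroup G H -> hom_on G H lam -> (forall x, Q x -> H x) ->
  conj_in G H P Q -> (forall y, Q y -> lam y = conj G g y) ->
  exists g', forall x, P x -> lam x = conj G g' x.
Proof.
  intros subH homH QH [h [Hh PQ]] lamQ.
  exists (gmul h (gmul g (ginv (lam h)))). intros x Px.
  pose proof (proj1 (PQ x) Px) as Qhx.
  rewrite <- (conjgKV h x) at 1.
  assert (Hhinv : H (ginv h)) by (apply subH; assumption).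
  rewrite (hom_conj subH homH _ _ Hhinv (QH _ Qhx)), (hom_inv subH homH _ Hh), (lamQ _ Qhx).
  rewrite !conjgM. reflexivity.
Qed.

End Groups.

Theorem lemma6p16 (G : group) (H : G -> Prop) (Ps : (G -> Prop) -> Prop) :
  toral_rel_hyp G ->
  is_subgroup G H ->
  (forall P, Ps P ->
     is_subgroup G P /\ (forall x, P x -> H x) /\ abelian G P /\
     exists x, P x /\ x <> gone) ->
  rel_immutable G H Ps ->
  rel_immutable G H (fun Q => exists P, Ps P /\ Q = centralizer G H P) /\
  (forall P0 : (G -> Prop) -> Prop,
     (forall Q, P0 Q -> Ps Q) ->
     (forall P, Ps P -> exists Q, P0 Q /\ conj_in G H P Q) ->
     (forall Q1 Q2, P0 Q1 -> P0 Q2 -> conj_in G H Q1 Q2 -> Q1 = Q2) ->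
     rel_immutable G H P0).
Proof.
  intros _ subH HPs immut. split.
  - apply (rel_immutable_sub (Ps := Ps)); [|assumption].
    intros lam homQ. eapply in_HomP_sub; [|eassumption].
    intros P PsP. destruct (HPs P PsP) as [_ [PH [abP _]]].
    exists (centralizer G H P). split; [eauto|].
    apply abelian_sub_centralizer; assumption.
  - intros P0 P0Ps repr _. apply (rel_immutable_sub (Ps := Ps)); [|assumption].
    intros lam [homH innerP0]. split; [assumption|].
    intros P PsP. destruct (repr P PsP) as [Q [P0Q PQ]].
    destruct (innerP0 Q P0Q) as [g lamQ].
    destruct (HPs Q (P0Ps Q P0Q)) as [_ [QH _]].
    eapply inner_on_conj_in; eassumption.
Qed.
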